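(* Let $f\colon X\to X$ be a homeomorphism of a metric space $X$. Every isolated set $\Lambda$ of $f$ admits a (discrete) catenary pseudo-metric.
   Context: An $f$-invariant set $\Lambda$ is isolated if there is a compact neighborhood $N$ of $\Lambda$ (an isolating neighborhood) such that $f^n(x)\in N$ for all $n\in\mathbb{Z}$ implies $x\in\Lambda$. For $\mathrm d\colon N\times N\to\mathbb{R}$, set $\ddot{\mathrm d}(x,y)=\mathrm d(f(x),f(y))-2\mathrm d(x,y)+\mathrm d(f^{-1}(x),f^{-1}(y))$ whenever all these points lie in $N$. A catenary pseudo-metric for $\Lambda$ is a continuous pseudo-metric $\mathrm d\colon N\times N\to\mathbb{R}$, with $N$ an isolating neighborhood of $\Lambda$, such that $\ddot{\mathrm d}=\mathrm d$ wherever defined, and $\mathrm d(x,y)=0$ if and only if $x=y$ or $x,y\in\Lambda$. *)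

From Stdlib Require Import Reals List ZArith.
Open Scope R_scope.

Definition is_metric {X : Type} (dist : X -> X -> R) : Prop :=
  (forall x y, 0 <= dist x y) /\
  (forall x y, dist x y = 0 <-> x = y) /\
  (forall x y, dist x y = dist y x) /\
  (forall x y z, dist x z <= dist x y + dist y z).

Definition is_open {X : Type} (dist : X -> X -> R) (U : X -> Prop) : Prop :=
  forall x, U x -> exists r, 0 < r /\ forall y, dist x y < r -> U y.

Definition is_compact {X : Type} (dist : X -> X -> R) (K : X -> Prop) : Prop :=
  forall (I : Type) (U : I -> X -> Prop),
    (forall i, is_open dist (U i)) ->
    (forall x, K x -> exists i, U i x) ->
    exists l : list I, forall x, K x -> exists i, In i l /\ U i x.

Definition is_nbhd {X : Type} (dist : X -> X -> R) (N L : X -> Prop) : Prop :=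
  exists U, is_open dist U /\ (forall x, L x -> U x) /\ (forall x, U x -> N x).

Definition continuous_map {X : Type} (dist : X -> X -> R) (f : X -> X) : Prop :=
  forall x eps, 0 < eps -> exists delta, 0 < delta /\
    forall y, dist x y < delta -> dist (f x) (f y) < eps.

Definition is_homeomorphism {X : Type} (dist : X -> X -> R) (f g : X -> X) : Prop :=
  (forall x, g (f x) = x) /\ (forall x, f (g x) = x) /\
  continuous_map dist f /\ continuous_map dist g.

Definition iterZ {X : Type} (f g : X -> X) (n : Z) (x : X) : X :=
  match n with
  | Z0 => x
  | Zpos p => Nat.iter (Pos.to_nat p) f x
  | Zneg p => Nat.iter (Pos.to_nat p) g x
  end.

Definition invariant {X : Type} (f g : X -> X) (L : X -> Prop) : Prop :=
  forall x, L x <-> L (f x).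

Definition isolating_nbhd {X : Type} (dist : X -> X -> R) (f g : X -> X)
    (L N : X -> Prop) : Prop :=
  is_compact dist N /\ is_nbhd dist N L /\
  forall x, (forall n : Z, N (iterZ f g n x)) -> L x.

Definition isolated_set {X : Type} (dist : X -> X -> R) (f g : X -> X)
    (L : X -> Prop) : Prop :=
  invariant f g L /\ exists N, isolating_nbhd dist f g L N.

Definition pseudo_metric_on {X : Type} (N : X -> Prop) (d : X -> X -> R) : Prop :=
  (forall x, N x -> d x x = 0) /\
  (forall x y, N x -> N y -> d x y = d y x) /\
  (forall x y z, N x -> N y -> N z -> d x z <= d x y + d y z).

Definition continuous_on_sq {X : Type} (dist : X -> X -> R) (N : X -> Prop)
    (d : X -> X -> R) : Prop :=
  forall x y eps, N x -> N y -> 0 < eps -> exists delta, 0 < delta /\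
    forall x' y', N x' -> N y' -> dist x x' < delta -> dist y y' < delta ->
      Rabs (d x' y' - d x y) < eps.

Definition ddot {X : Type} (f g : X -> X) (d : X -> X -> R) (x y : X) : R :=
  d (f x) (f y) - 2 * d x y + d (g x) (g y).

Definition catenary_pseudo_metric {X : Type} (dist : X -> X -> R) (f g : X -> X)
    (L N : X -> Prop) (d : X -> X -> R) : Prop :=
  isolating_nbhd dist f g L N /\
  pseudo_metric_on N d /\ continuous_on_sq dist N d /\
  (forall x y, N x -> N y -> N (f x) -> N (f y) -> N (g x) -> N (g y) ->
     ddot f g d x y = d x y) /\
  (forall x y, N x -> N y -> (d x y = 0 <-> (x = y \/ (L x /\ L y)))).

From Coquelicot Require Import Coquelicot.
From Stdlib Require Import Reals Lra Lia List Classical ZArith.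
Open Scope R_scope.

(* Collapse the isolating neighbourhood N to a point: r(x,y) = min(min(dist x y, 1), dist(x,N) + dist(y,N))
   is a continuous pseudo-metric vanishing exactly on the diagonal and on N x N.  Average it along
   orbits, d(x,y) = sum_{n in Z} mu^|n| r(f^n x, f^n y) with mu + 1/mu = 3.  Then
   ddot d = d + (2 mu - 3) r, so ddot d = d wherever r vanishes, in particular on N x N; and
   d(x,y) = 0 for x <> y forces the whole orbits of x and y to stay in N, i.e. x, y in Lambda. *)

Ltac destruct_Rmin :=
  unfold Rmin in *; repeat match goal with
  | |- context [Rle_dec ?a ?b] => destruct (Rle_dec a b)
  | H : context [Rle_dec ?a ?b] |- _ => destruct (Rle_dec a b)
  end.

Section CollapseDist.
Context {X : Type} (dist : X -> X -> R).
Hypothesis dist_metric : is_metric dist.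

Let dist_ge0 x y : 0 <= dist x y. Proof. apply dist_metric. Qed.
Let dist_eq0 x y : dist x y = 0 <-> x = y. Proof. apply dist_metric. Qed.
Let dist_sym x y : dist x y = dist y x. Proof. apply dist_metric. Qed.
Let dist_triangle x y z : dist x z <= dist x y + dist y z. Proof. apply dist_metric. Qed.

Definition trunc_dist x y := Rmin (dist x y) 1.

Lemma trunc_dist_ge0 x y : 0 <= trunc_dist x y.
Proof. unfold trunc_dist; pose proof (dist_ge0 x y); destruct_Rmin; lra. Qed.

Lemma trunc_dist_le1 x y : trunc_dist x y <= 1.
Proof. apply Rmin_r. Qed.

Lemma trunc_dist_le x y : trunc_dist x y <= dist x y.
Proof. apply Rmin_l. Qed.

Lemma trunc_dist_sym x y : trunc_dist x y = trunc_dist y x.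
Proof. unfold trunc_dist; rewrite dist_sym; reflexivity. Qed.

Lemma trunc_dist_triangle x y z : trunc_dist x z <= trunc_dist x y + trunc_dist y z.
Proof.
  unfold trunc_dist; pose proof (dist_triangle x y z).
  pose proof (dist_ge0 x y); pose proof (dist_ge0 y z); destruct_Rmin; lra.
Qed.

Lemma trunc_dist_refl x : trunc_dist x x = 0.
Proof.
  unfold trunc_dist; rewrite (proj2 (dist_eq0 x x)) by reflexivity; destruct_Rmin; lra.
Qed.

Lemma trunc_dist_gt0 x y : x <> y -> 0 < trunc_dist x y.
Proof.
  intros ne; unfold trunc_dist; pose proof (dist_ge0 x y).
  assert (dist x y <> 0) by (rewrite dist_eq0; exact ne). destruct_Rmin; lra.
Qed.

Variable N : X -> Prop.

Let near_N z s := s = 1 \/ exists w, N w /\ s = trunc_dist z w.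

(* [dist_to z = min(1, inf_{w in N} dist z w)]; the value [1] keeps the infimum finite when [N] is empty. *)
Definition dist_to z := real (Glb_Rbar (near_N z)).

Lemma dist_to_glb z : is_glb_Rbar (near_N z) (dist_to z).
Proof.
  unfold dist_to. destruct (Glb_Rbar_correct (near_N z)) as [lb glb].
  assert (le1 : Rbar_le (Glb_Rbar (near_N z)) 1) by (apply lb; left; reflexivity).
  assert (ge0 : Rbar_le 0 (Glb_Rbar (near_N z))).
  { apply glb; intros s [->|[w [_ ->]]]; simpl; [lra | apply trunc_dist_ge0]. }
  destruct (Glb_Rbar (near_N z)); simpl in *; try contradiction; split; assumption.
Qed.

Lemma dist_to_le z w : N w -> dist_to z <= trunc_dist z w.
Proof. intros Nw; apply (proj1 (dist_to_glb z)); right; exists w; auto. Qed.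

Lemma dist_to_le1 z : dist_to z <= 1.
Proof. apply (proj1 (dist_to_glb z)); left; reflexivity. Qed.

Lemma dist_to_lb z m : (forall w, N w -> m <= trunc_dist z w) -> m <= 1 -> m <= dist_to z.
Proof.
  intros Hm m1; apply (proj2 (dist_to_glb z) (Finite m)).
  intros s [->|[w [Nw ->]]]; simpl; auto.
Qed.

Lemma dist_to_ge0 z : 0 <= dist_to z.
Proof. apply dist_to_lb; [intros; apply trunc_dist_ge0 | lra]. Qed.

Lemma dist_to_in w : N w -> dist_to w = 0.
Proof.
  intros Nw; pose proof (dist_to_le w w Nw); rewrite trunc_dist_refl in *.
  pose proof (dist_to_ge0 w); lra.
Qed.

Lemma dist_to_lipschitz y z : dist_to z <= dist_to y + trunc_dist y z.
Proof.
  assert (dist_to z - trunc_dist y z <= dist_to y); [|lra].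
  apply dist_to_lb.
  - intros w Nw; pose proof (dist_to_le z w Nw); pose proof (trunc_dist_triangle z y w).
    rewrite (trunc_dist_sym y z); lra.
  - pose proof (dist_to_le1 z); pose proof (trunc_dist_ge0 y z); lra.
Qed.

Definition collapse_dist x y := Rmin (trunc_dist x y) (dist_to x + dist_to y).

Lemma collapse_dist_ge0 x y : 0 <= collapse_dist x y.
Proof.
  unfold collapse_dist; pose proof (trunc_dist_ge0 x y).
  pose proof (dist_to_ge0 x); pose proof (dist_to_ge0 y); destruct_Rmin; lra.
Qed.

Lemma collapse_dist_le1 x y : collapse_dist x y <= 1.
Proof. unfold collapse_dist; pose proof (trunc_dist_le1 x y); destruct_Rmin; lra. Qed.

Lemma collapse_dist_sym x y : collapse_dist x y = collapse_dist y x.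
Proof. unfold collapse_dist; rewrite trunc_dist_sym, Rplus_comm; reflexivity. Qed.

Lemma collapse_dist_refl x : collapse_dist x x = 0.
Proof.
  unfold collapse_dist; rewrite trunc_dist_refl; pose proof (dist_to_ge0 x); destruct_Rmin; lra.
Qed.

Lemma collapse_dist_triangle x y z : collapse_dist x z <= collapse_dist x y + collapse_dist y z.
Proof.
  unfold collapse_dist. pose proof (trunc_dist_triangle x y z).
  pose proof (dist_to_lipschitz y z). pose proof (dist_to_lipschitz y x).
  rewrite (trunc_dist_sym y x) in *.
  pose proof (dist_to_ge0 x); pose proof (dist_to_ge0 y); pose proof (dist_to_ge0 z).
  destruct_Rmin; lra.
Qed.

Lemma collapse_dist_in x y : N x -> N y -> collapse_dist x y = 0.
Proof.
  intros Nx Ny; unfold collapse_dist; rewrite (dist_to_in x), (dist_to_in y) by assumption.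
  pose proof (trunc_dist_ge0 x y); destruct_Rmin; lra.
Qed.

Lemma collapse_dist_lipschitz x y x' y' :
  Rabs (collapse_dist x' y' - collapse_dist x y) <= dist x x' + dist y y'.
Proof.
  unfold collapse_dist.
  pose proof (trunc_dist_triangle x' x y'). pose proof (trunc_dist_triangle x y' y).
  pose proof (trunc_dist_triangle x x' y'). pose proof (trunc_dist_triangle x y y').
  pose proof (dist_to_lipschitz x x'). pose proof (dist_to_lipschitz x' x).
  pose proof (dist_to_lipschitz y y'). pose proof (dist_to_lipschitz y' y).
  pose proof (trunc_dist_le x x'). pose proof (trunc_dist_le y y').
  rewrite (trunc_dist_sym x' x), (trunc_dist_sym y' y) in *.
  pose proof (trunc_dist_ge0 x x'); pose proof (trunc_dist_ge0 y y').
  unfold Rabs; destruct Rcase_abs; destruct_Rmin; lra.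
Qed.

Hypothesis N_compact : is_compact dist N.

Lemma compact_dist_lb z : ~ N z -> exists e, 0 < e /\ forall w, N w -> e <= dist z w.
Proof.
  intros nz.
  destruct (N_compact nat (fun k w => / INR (S k) < dist z w)) as [l Hl].
  - intros k w Hw. exists (dist z w - / INR (S k)). split; [lra|].
    intros y Hy. pose proof (dist_triangle z y w). rewrite (dist_sym y w) in *. lra.
  - intros w Nw.
    assert (0 < dist z w).
    { pose proof (dist_ge0 z w).
      assert (dist z w <> 0) by (rewrite dist_eq0; intros ->; auto). lra. }
    destruct (archimed_cor1 _ H) as [n [Hn Hn0]]. exists (pred n).
    rewrite Nat.succ_pred_pos; auto.
  - set (m := fold_right Nat.max 0%nat l).
    exists (/ INR (S m)). split; [apply Rinv_0_lt_compat, lt_0_INR; lia|].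
    intros w Nw. destruct (Hl w Nw) as [i [Hi Hu]].
    assert (i <= m)%nat.
    { unfold m; clear -Hi. induction l as [|a l IH]; simpl in *; [contradiction|].
      destruct Hi as [->|Hi]; [lia | specialize (IH Hi); lia]. }
    assert (/ INR (S m) <= / INR (S i))
      by (apply Rinv_le_contravar; [apply lt_0_INR; lia | apply le_INR; lia]).
    lra.
Qed.

Lemma dist_to_gt0 z : ~ N z -> 0 < dist_to z.
Proof.
  intros nz; destruct (compact_dist_lb z nz) as [e [e0 He]].
  apply Rlt_le_trans with (Rmin e 1); [apply Rmin_pos; lra|].
  apply dist_to_lb; [|apply Rmin_r].
  intros w Nw; specialize (He w Nw); unfold trunc_dist; destruct_Rmin; lra.
Qed.

Lemma collapse_dist_eq0 x y : collapse_dist x y = 0 -> x = y \/ (N x /\ N y).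
Proof.
  intros E0. destruct (classic (x = y)) as [e|ne]; [left; exact e | right].
  pose proof (trunc_dist_gt0 x y ne). unfold collapse_dist in E0.
  pose proof (dist_to_ge0 x); pose proof (dist_to_ge0 y).
  assert (dist_to x + dist_to y = 0) by (destruct_Rmin; lra).
  split; apply NNPP; intros nN; pose proof (dist_to_gt0 _ nN); lra.
Qed.

End CollapseDist.

Lemma sum_f_R0_abs_le (c : nat -> R) b n :
  (forall k, (k <= n)%nat -> Rabs (c k) <= b) -> Rabs (sum_f_R0 c n) <= INR (S n) * b.
Proof.
  induction n as [|n IH]; intros Hc; simpl sum_f_R0.
  - specialize (Hc 0%nat (le_n 0)); simpl; lra.
  - rewrite S_INR. eapply Rle_trans; [apply Rabs_triang|].
    assert (Rabs (sum_f_R0 c n) <= INR (S n) * b) by (apply IH; intros; apply Hc; lia).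
    specialize (Hc (S n) (le_n _)); lra.
Qed.

Lemma iter_continuous {X : Type} dist (h : X -> X) k :
  continuous_map dist h -> continuous_map dist (Nat.iter k h).
Proof.
  intros hc; induction k as [|k IH]; simpl; intros x eps He.
  - exists eps; auto.
  - destruct (hc (Nat.iter k h x) eps He) as [d1 [d10 H1]].
    destruct (IH x d1 d10) as [d2 [d20 H2]].
    exists d2; split; auto.
    intros y Hy; apply H1, H2, Hy.
Qed.

Lemma continuous_map_family_upto {X : Type} dist (h : nat -> X -> X) K eta x :
  (forall k, continuous_map dist (h k)) -> 0 < eta ->
  exists delta, 0 < delta /\ forall x', dist x x' < delta ->
    forall k, (k <= K)%nat -> dist (h k x) (h k x') < eta.
Proof.
  intros hc Heta; induction K as [|K IH].
  - destruct (hc 0%nat x eta Heta) as [d [d0 Hd]]. exists d; split; auto.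
    intros x' Hx k Hk; replace k with 0%nat by lia; auto.
  - destruct IH as [d1 [d10 Hd1]]. destruct (hc (S K) x eta Heta) as [d2 [d20 Hd2]].
    exists (Rmin d1 d2); split; [apply Rmin_pos; auto|].
    intros x' Hx k Hk; pose proof (Rmin_l d1 d2); pose proof (Rmin_r d1 d2).
    destruct (Nat.eq_dec k (S K)) as [->|ne]; [apply Hd2 | apply Hd1]; lra || lia.
Qed.

Section OrbitSum.
Context {X : Type} (mu : R) (r : X -> X -> R).
Hypothesis mu_gt0 : 0 < mu.
Hypothesis mu_lt1 : mu < 1.
Hypothesis r_ge0 : forall x y, 0 <= r x y.
Hypothesis r_le1 : forall x y, r x y <= 1.

Let mu_abs_lt1 : Rabs mu < 1.
Proof. rewrite Rabs_pos_eq; lra. Qed.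

Let mu_pow_gt0 k : 0 < mu ^ k.
Proof. apply pow_lt; lra. Qed.

Let mu_pow_le1 k : mu ^ k <= 1.
Proof. rewrite <- (pow1 k); apply pow_incr; lra. Qed.

Lemma ex_series_geom_dominated (a : nat -> R) : (forall n, Rabs (a n) <= mu ^ n) -> ex_series a.
Proof. intros Ha; apply (ex_series_le a (fun n => mu ^ n)); auto; apply ex_series_geom; auto. Qed.

Lemma series_tail_geom_bound (c : nat -> R) K :
  (forall n, Rabs (c n) <= mu ^ n) -> Rabs (Series (fun k => c (K + k)%nat)) <= mu ^ K / (1 - mu).
Proof.
  intros Hc. assert (tail_le : forall n, Rabs (c (K + n)%nat) <= mu ^ K * mu ^ n)
    by (intros n; rewrite <- pow_add; apply Hc).
  eapply Rle_trans; [apply Series_Rabs|].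
  - apply ex_series_geom_dominated; intros n; rewrite Rabs_Rabsolu.
    specialize (tail_le n); specialize (mu_pow_le1 K); specialize (mu_pow_gt0 n); nra.
  - unfold Rdiv; rewrite <- Series_geom by auto; rewrite <- Series_scal_l.
    apply Series_le; [intros n; split; [apply Rabs_pos | apply tail_le]|].
    apply (ex_series_scal_l (V := R_NormedModule)), ex_series_geom; auto.
Qed.

Definition orbit_sum (h : X -> X) x y :=
  Series (fun k => mu ^ k * r (Nat.iter k h x) (Nat.iter k h y)).

Lemma orbit_term_bound (h : X -> X) x y n :
  Rabs (mu ^ n * r (Nat.iter n h x) (Nat.iter n h y)) <= mu ^ n.
Proof.
  pose proof (mu_pow_gt0 n); pose proof (r_ge0 (Nat.iter n h x) (Nat.iter n h y)).
  pose proof (r_le1 (Nat.iter n h x) (Nat.iter n h y)).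
  rewrite Rabs_pos_eq by nra; nra.
Qed.

Lemma ex_orbit_sum (h : X -> X) x y :
  ex_series (fun k => mu ^ k * r (Nat.iter k h x) (Nat.iter k h y)).
Proof. apply ex_series_geom_dominated; intros; apply orbit_term_bound. Qed.

Lemma orbit_sum_step (h : X -> X) x y : orbit_sum h x y = r x y + mu * orbit_sum h (h x) (h y).
Proof.
  unfold orbit_sum; rewrite Series_incr_1 by apply ex_orbit_sum.
  rewrite <- Series_scal_l; simpl pow; rewrite Rmult_1_l; f_equal.
  apply Series_ext; intros k; rewrite !Nat.iter_succ_r; simpl; ring.
Qed.

Lemma orbit_sum_ge0 (h : X -> X) x y : 0 <= orbit_sum h x y.
Proof.
  unfold orbit_sum; replace 0 with (Series (fun k => 0 * mu ^ k))
    by (rewrite Series_scal_l; ring).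
  apply Series_le; [|apply ex_orbit_sum].
  intros n; split; [lra|].
  pose proof (mu_pow_gt0 n); pose proof (r_ge0 (Nat.iter n h x) (Nat.iter n h y)); nra.
Qed.

Lemma orbit_sum_ge_term (h : X -> X) k : forall x y,
  mu ^ k * r (Nat.iter k h x) (Nat.iter k h y) <= orbit_sum h x y.
Proof.
  induction k as [|k IH]; intros x y; rewrite orbit_sum_step; simpl.
  - pose proof (orbit_sum_ge0 h (h x) (h y)); nra.
  - specialize (IH (h x) (h y)); rewrite <- !Nat.iter_succ_r in IH; simpl in IH.
    pose proof (r_ge0 x y); nra.
Qed.

Lemma orbit_sum_eq0 (h : X -> X) x y :
  orbit_sum h x y = 0 <-> forall k, r (Nat.iter k h x) (Nat.iter k h y) = 0.
Proof.
  split.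
  - intros E k; pose proof (orbit_sum_ge_term h k x y); rewrite E in *.
    pose proof (mu_pow_gt0 k); pose proof (r_ge0 (Nat.iter k h x) (Nat.iter k h y)); nra.
  - intros E; unfold orbit_sum; replace 0 with (0 * Series (fun k => mu ^ k)) by ring.
    rewrite <- Series_scal_l; apply Series_ext; intros k; rewrite E; ring.
Qed.

Lemma orbit_sum_sym (h : X -> X) x y :
  (forall x y, r x y = r y x) -> orbit_sum h x y = orbit_sum h y x.
Proof. intros r_sym; unfold orbit_sum; apply Series_ext; intros; rewrite r_sym; auto. Qed.

Lemma orbit_sum_triangle (h : X -> X) x y z :
  (forall x y z, r x z <= r x y + r y z) -> orbit_sum h x z <= orbit_sum h x y + orbit_sum h y z.
Proof.
  intros r_tri; unfold orbit_sum; rewrite <- Series_plus by apply ex_orbit_sum.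
  apply Series_le.
  - intros n; pose proof (mu_pow_gt0 n); split.
    + pose proof (r_ge0 (Nat.iter n h x) (Nat.iter n h z)); nra.
    + pose proof (r_tri (Nat.iter n h x) (Nat.iter n h y) (Nat.iter n h z)); nra.
  - apply (ex_series_plus (V := R_NormedModule)); apply ex_orbit_sum.
Qed.

Lemma orbit_sum_continuous (dist : X -> X -> R) (h : X -> X) x y eps :
  (forall x y x' y', Rabs (r x' y' - r x y) <= dist x x' + dist y y') ->
  continuous_map dist h -> 0 < eps ->
  exists delta, 0 < delta /\ forall x' y', dist x x' < delta -> dist y y' < delta ->
    Rabs (orbit_sum h x' y' - orbit_sum h x y) < eps.
Proof.
  intros r_lip hc He.
  (* Cut the series at [K]: the tail is below [eps/2], the head below [eps/4]. *)
  destruct (pow_lt_1_zero mu mu_abs_lt1 (eps * (1 - mu) / 2)) as [K0 HK0];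
    [apply Rdiv_lt_0_compat; nra|].
  set (K := S K0).
  assert (tail_small : mu ^ K / (1 - mu) < eps / 2).
  { specialize (HK0 K ltac:(unfold K; lia)); rewrite Rabs_pos_eq in HK0 by (left; auto).
    apply (Rmult_lt_reg_r (1 - mu)); [lra|]; unfold Rdiv.
    rewrite Rmult_assoc, Rinv_l by lra; lra. }
  assert (K_pos : 0 < INR K) by (apply lt_0_INR; unfold K; lia).
  set (eta := eps / (8 * INR K)).
  assert (eta_pos : 0 < eta) by (unfold eta; apply Rdiv_lt_0_compat; lra).
  assert (hkc : forall k, continuous_map dist (Nat.iter k h)) by (intros; apply iter_continuous; auto).
  destruct (continuous_map_family_upto dist _ (pred K) eta x hkc eta_pos) as [d1 [d10 Hd1]].
  destruct (continuous_map_family_upto dist _ (pred K) eta y hkc eta_pos) as [d2 [d20 Hd2]].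
  exists (Rmin d1 d2); split; [apply Rmin_pos; auto|].
  intros x' y' Hx Hy; pose proof (Rmin_l d1 d2); pose proof (Rmin_r d1 d2).
  unfold orbit_sum; rewrite <- Series_minus by apply ex_orbit_sum.
  set (c := fun n => mu ^ n * r (Nat.iter n h x') (Nat.iter n h y')
                     - mu ^ n * r (Nat.iter n h x) (Nat.iter n h y)).
  assert (c_bound : forall n, Rabs (c n) <= mu ^ n).
  { intros n; unfold c; pose proof (mu_pow_gt0 n).
    pose proof (r_ge0 (Nat.iter n h x) (Nat.iter n h y)); pose proof (r_le1 (Nat.iter n h x) (Nat.iter n h y)).
    pose proof (r_ge0 (Nat.iter n h x') (Nat.iter n h y')); pose proof (r_le1 (Nat.iter n h x') (Nat.iter n h y')).
    unfold Rabs; destruct Rcase_abs; nra. }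
  rewrite (Series_incr_n c K) by (unfold K; lia || apply ex_series_geom_dominated; auto).
  assert (head_small : Rabs (sum_f_R0 c (pred K)) <= INR K * (2 * eta)).
  { replace K with (S (pred K)) at 2 by (unfold K; lia).
    apply sum_f_R0_abs_le; intros k Hk; unfold c; rewrite <- Rmult_minus_distr_l.
    rewrite Rabs_mult, (Rabs_pos_eq (mu ^ k)) by (left; auto).
    specialize (r_lip (Nat.iter k h x) (Nat.iter k h y) (Nat.iter k h x') (Nat.iter k h y')).
    specialize (Hd1 x' ltac:(lra) k Hk); specialize (Hd2 y' ltac:(lra) k Hk).
    pose proof (mu_pow_le1 k); pose proof (mu_pow_gt0 k).
    pose proof (Rabs_pos (r (Nat.iter k h x') (Nat.iter k h y') - r (Nat.iter k h x) (Nat.iter k h y))).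
    nra. }
  pose proof (series_tail_geom_bound c K c_bound).
  assert (INR K * (2 * eta) = eps / 4) by (unfold eta; field; lra).
  eapply Rle_lt_trans; [apply Rabs_triang|]; lra.
Qed.

End OrbitSum.

Section IntegerIterates.
Context {X : Type} (f g : X -> X).

Lemma forall_iterZ (Q : X -> X -> Prop) x y :
  (forall n : Z, Q (iterZ f g n x) (iterZ f g n y)) <->
  (forall k, Q (Nat.iter k f x) (Nat.iter k f y)) /\
  (forall k, Q (Nat.iter k g (g x)) (Nat.iter k g (g y))).
Proof.
  split.
  - intros HQ; split; intros k.
    + destruct k as [|k]; [apply (HQ 0%Z)|].
      specialize (HQ (Zpos (Pos.of_succ_nat k))); simpl in HQ.
      rewrite SuccNat2Pos.id_succ in HQ; exact HQ.
    + specialize (HQ (Zneg (Pos.of_succ_nat k))); simpl in HQ.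
      rewrite SuccNat2Pos.id_succ, !Nat.iter_succ_r in HQ; exact HQ.
  - intros [Hf Hg] [|p|p]; simpl; [apply (Hf 0%nat) | apply Hf|].
    rewrite <- (Nat.succ_pred_pos _ (Pos2Nat.is_pos p)), !Nat.iter_succ_r; apply Hg.
Qed.

Lemma iter_inj (h h' : X -> X) k a b :
  (forall x, h' (h x) = x) -> Nat.iter k h a = Nat.iter k h b -> a = b.
Proof.
  intros hK; induction k as [|k IH]; simpl; intros E; auto.
  apply IH; rewrite <- (hK (Nat.iter k h a)), E, hK; reflexivity.
Qed.

Hypothesis gK : forall x, g (f x) = x.
Hypothesis fK : forall x, f (g x) = x.

Lemma iterZ_inj n x y : iterZ f g n x = iterZ f g n y -> x = y.
Proof. destruct n; simpl; [auto | apply iter_inj with g; auto | apply iter_inj with f; auto]. Qed.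

Lemma invariant_iterZ (L : X -> Prop) n x : invariant f g L -> L x -> L (iterZ f g n x).
Proof.
  intros Linv Lx; destruct n as [|p|p]; simpl; auto; induction (Pos.to_nat p) as [|k IH];
    simpl; auto; [apply (proj1 (Linv _)) | apply (proj2 (Linv _)); rewrite fK]; exact IH.
Qed.

End IntegerIterates.

Section CatenaryDist.
Context {X : Type} (f g : X -> X) (mu : R) (r : X -> X -> R).

(* [catenary_dist x y] is [sum_{n in Z} mu^|n| r (f^n x) (f^n y)], split at [n = 0]. *)
Definition catenary_dist x y := orbit_sum mu r f x y + mu * orbit_sum mu r g (g x) (g y).

Hypothesis mu_gt0 : 0 < mu.
Hypothesis mu_lt1 : mu < 1.
Hypothesis r_ge0 : forall x y, 0 <= r x y.
Hypothesis r_le1 : forall x y, r x y <= 1.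

Lemma catenary_dist_eq0 x y :
  catenary_dist x y = 0 <-> forall n : Z, r (iterZ f g n x) (iterZ f g n y) = 0.
Proof.
  rewrite (forall_iterZ f g (fun a b => r a b = 0)).
  rewrite <- !(orbit_sum_eq0 mu r mu_gt0 mu_lt1 r_ge0 r_le1); unfold catenary_dist.
  pose proof (orbit_sum_ge0 mu r mu_gt0 mu_lt1 r_ge0 r_le1 f x y).
  pose proof (orbit_sum_ge0 mu r mu_gt0 mu_lt1 r_ge0 r_le1 g (g x) (g y)).
  split; [intros E; split|intros [-> ->]]; nra.
Qed.

Lemma catenary_dist_pseudo_metric (N : X -> Prop) :
  (forall x, r x x = 0) -> (forall x y, r x y = r y x) ->
  (forall x y z, r x z <= r x y + r y z) -> pseudo_metric_on N catenary_dist.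
Proof.
  intros r_refl r_sym r_tri; split; [|split].
  - intros x _; apply catenary_dist_eq0; auto.
  - intros x y _ _; unfold catenary_dist; rewrite !(orbit_sum_sym mu r _ x y), !(orbit_sum_sym mu r _ (g x)); auto.
  - intros x y z _ _ _; unfold catenary_dist.
    pose proof (orbit_sum_triangle mu r mu_gt0 mu_lt1 r_ge0 r_le1 f x y z r_tri).
    pose proof (orbit_sum_triangle mu r mu_gt0 mu_lt1 r_ge0 r_le1 g (g x) (g y) (g z) r_tri).
    nra.
Qed.

Lemma catenary_dist_continuous (dist : X -> X -> R) (N : X -> Prop) :
  (forall x y x' y', Rabs (r x' y' - r x y) <= dist x x' + dist y y') ->
  continuous_map dist f -> continuous_map dist g -> continuous_on_sq dist N catenary_dist.
Proof.
  intros r_lip fc gc x y eps _ _ He.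
  destruct (orbit_sum_continuous mu r mu_gt0 mu_lt1 r_ge0 r_le1 dist f x y (eps / 2))
    as [d1 [d10 H1]]; auto; [lra|].
  destruct (orbit_sum_continuous mu r mu_gt0 mu_lt1 r_ge0 r_le1 dist g (g x) (g y) (eps / 2))
    as [d2 [d20 H2]]; auto; [lra|].
  destruct (gc x d2 d20) as [dx [dx0 Hx]]; destruct (gc y d2 d20) as [dy [dy0 Hy]].
  exists (Rmin d1 (Rmin dx dy)); split; [repeat apply Rmin_pos; auto|].
  intros x' y' _ _ Hx' Hy'.
  pose proof (Rmin_l d1 (Rmin dx dy)); pose proof (Rmin_r d1 (Rmin dx dy)).
  pose proof (Rmin_l dx dy); pose proof (Rmin_r dx dy).
  specialize (H1 x' y' ltac:(lra) ltac:(lra)).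
  specialize (H2 (g x') (g y') (Hx x' ltac:(lra)) (Hy y' ltac:(lra))).
  unfold catenary_dist.
  replace (_ - _) with ((orbit_sum mu r f x' y' - orbit_sum mu r f x y)
    + mu * (orbit_sum mu r g (g x') (g y') - orbit_sum mu r g (g x) (g y))) by ring.
  eapply Rle_lt_trans; [apply Rabs_triang|].
  rewrite Rabs_mult, (Rabs_pos_eq mu) by lra.
  pose proof (Rabs_pos (orbit_sum mu r g (g x') (g y') - orbit_sum mu r g (g x) (g y))); nra.
Qed.


Lemma catenary_dist_ddot x y :
  (forall x, g (f x) = x) -> (forall x, f (g x) = x) ->
  mu * mu + 1 = 3 * mu -> r x y = 0 -> ddot f g catenary_dist x y = catenary_dist x y.
Proof.
  intros gK fK mu_eq rxy; unfold ddot, catenary_dist; rewrite !gK.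
  set (P := orbit_sum mu r f); set (Q := orbit_sum mu r g).
  assert (P_x : P x y = mu * P (f x) (f y)).
  { unfold P; rewrite orbit_sum_step, rxy by auto; ring. }
  assert (P_gx : P (g x) (g y) = r (g x) (g y) + mu * P x y).
  { unfold P; rewrite orbit_sum_step, !fK by auto; reflexivity. }
  assert (Q_x : Q x y = mu * Q (g x) (g y)).
  { unfold Q; rewrite orbit_sum_step, rxy by auto; ring. }
  assert (Q_gx : Q (g x) (g y) = r (g x) (g y) + mu * Q (g (g x)) (g (g y))).
  { unfold Q; apply orbit_sum_step; auto. }
  rewrite Q_x, P_gx, P_x, Q_gx.
  transitivity (mu * P (f x) (f y) + mu * (r (g x) (g y) + mu * Q (g (g x)) (g (g y)))
    + (mu * mu + 1 - 3 * mu) * (P (f x) (f y) + r (g x) (g y) + mu * Q (g (g x)) (g (g y)))); [ring|].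
  rewrite mu_eq; ring.
Qed.

End CatenaryDist.

(* [mu + 1/mu = 3] makes [mu^|n-1| + mu^|n+1| = 3 mu^|n|] for [n <> 0], so the defect
   [ddot d - d] of [catenary_dist] only involves the term [r x y]. *)
Lemma catenary_weight_exists : exists mu, 0 < mu /\ mu < 1 /\ mu * mu + 1 = 3 * mu.
Proof.
  assert (s5 : sqrt 5 * sqrt 5 = 5) by (apply sqrt_sqrt; lra).
  pose proof (sqrt_pos 5).
  exists ((3 - sqrt 5) / 2); repeat split; nra.
Qed.

Theorem mainTheorem16 (X : Type) (dist : X -> X -> R) (f g : X -> X)
    (L : X -> Prop) :
  is_metric dist ->
  is_homeomorphism dist f g ->
  isolated_set dist f g L ->
  exists (N : X -> Prop) (d : X -> X -> R),
    catenary_pseudo_metric dist f g L N d.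
Proof.
  intros dist_metric [gK [fK [fc gc]]] [Linv [N HN]].
  destruct catenary_weight_exists as [mu [mu_gt0 [mu_lt1 mu_eq]]].
  pose proof HN as [N_compact [[U [_ [LU UN]]] N_isolating]].
  set (r := collapse_dist dist N).
  pose proof (collapse_dist_ge0 dist dist_metric N) as r_ge0.
  pose proof (collapse_dist_le1 dist N) as r_le1.
  exists N, (catenary_dist f g mu r).
  split; [exact HN|]; split; [|split; [|split]].
  - apply catenary_dist_pseudo_metric; auto.
    + apply collapse_dist_refl; auto.
    + apply collapse_dist_sym; auto.
    + apply collapse_dist_triangle; auto.
  - apply catenary_dist_continuous; auto; apply collapse_dist_lipschitz; auto.
  - intros x y Nx Ny _ _ _ _; apply catenary_dist_ddot; auto; apply collapse_dist_in; auto.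
  - intros x y _ _; rewrite catenary_dist_eq0 by auto; split.
    + intros r0; destruct (classic (x = y)) as [e|ne]; [left; exact e | right].
      assert (orbits_in_N : forall n, N (iterZ f g n x) /\ N (iterZ f g n y)).
      { intros n; destruct (collapse_dist_eq0 dist dist_metric N N_compact _ _ (r0 n)) as [e|]; auto.
        contradiction (ne (iterZ_inj f g gK fK n x y e)). }
      split; apply N_isolating; intros n; apply orbits_in_N.
    + intros [->|[Lx Ly]] n; [apply collapse_dist_refl; auto|].
      apply collapse_dist_in; auto; apply UN, LU, invariant_iterZ; auto.
Qed.
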